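(* Let $J_1,\dots,J_7$ be pairwise anticommuting orthogonal complex structures on $\mathfrak a=\mathbb R^8$ and $V=\mathrm{Span}(J_1,\dots,J_5,J_6,J_6J_7)$, with an inner product whose restriction to $\mathrm{Span}(J_1,\dots,J_5)$ is standard, with $\mathrm{Span}(J_6,J_6J_7)\perp\mathrm{Span}(J_1,\dots,J_5)$, and whose restriction to $\mathrm{Span}(J_6,J_6J_7)$ is arbitrary. Then $(V,\langle\cdot,\cdot\rangle)$ is a WS-pair, while $V$ is not non-singular.
   Context: Orthogonal complex structures on $\mathbb R^8$ are orthogonal matrices $J$ with $J^2=-I_8$. An inner product on $V\subset\mathfrak{so}(8)$ is standard if it is a positive multiple of $(J,K)\mapsto-\mathrm{Tr}(JK)$. $V$ is non-singular if every nonzero element of $V$ is invertible. For a Euclidean space $\mathfrak a$, a subspace $V\subset\mathfrak{so}(\mathfrak a)$ with inner product $\langle\cdot,\cdot\rangle$ defines the metric 2-step nilpotent Lie algebra $\mathfrak n=V\oplus\mathfrak a$ (orthogonal sum, $V$ central, $\langle J,[X,Y]\rangle=\langle JX,Y\rangle$); it is a WS-pair if the corresponding simply connected nilpotent Lie group with left-invariant metric is weakly symmetric. Standing fact: this holds iff for every $J\in V$, $X\in\mathfrak a$ there is $N\in\mathcal N(V)=\{N\in O(\mathfrak a): NVN^{-1}\subset V$, $K\mapsto NKN^{-1}$ orthogonal on $(V,\langle\cdot,\cdot\rangle)\}$ with $NX=-X$, $NJ=-JN$. *)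

From HB Require Import structures.
From mathcomp Require Import all_boot all_order all_algebra.
From mathcomp Require Import reals.
Set Implicit Arguments. Unset Strict Implicit. Unset Printing Implicit Defensive.
Import Order.TTheory GRing.Theory Num.Theory.
Local Open Scope ring_scope.

Section Defs.
Variable R : realType.

Definition ocs (J : 'M[R]_8) : Prop := J^T *m J = 1%:M /\ J *m J = - 1%:M.

Definition in_span n (B : 'I_n -> 'M[R]_8) (A : 'M[R]_8) : Prop :=
  exists a : 'I_n -> R, A = \sum_(i < n) a i *: B i.

Definition inner_product_on (V : 'M[R]_8 -> Prop) (ip : 'M[R]_8 -> 'M[R]_8 -> R) : Prop :=
  [/\ (forall (a : R) x y z, V x -> V y -> V z -> ip (a *: x + y) z = a * ip x z + ip y z),
      (forall x y, V x -> V y -> ip x y = ip y x)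
    & (forall x, V x -> x != 0 -> 0 < ip x x)].

Definition std_form (K L : 'M[R]_8) : R := - \tr (K *m L).

Definition in_NV (V : 'M[R]_8 -> Prop) (ip : 'M[R]_8 -> 'M[R]_8 -> R) (N : 'M[R]_8) : Prop :=
  [/\ N^T *m N = 1%:M,
      (forall K, V K -> V (N *m K *m invmx N))
    & (forall K L, V K -> V L ->
         ip (N *m K *m invmx N) (N *m L *m invmx N) = ip K L)].

(* WS-pair, via the standing criterion. *)
Definition WS_pair (V : 'M[R]_8 -> Prop) (ip : 'M[R]_8 -> 'M[R]_8 -> R) : Prop :=
  forall (J : 'M[R]_8) (X : 'cV[R]_8), V J ->
    exists N : 'M[R]_8, [/\ in_NV V ip N, N *m X = - X & N *m J = - (J *m N)].

Definition nonsingular (V : 'M[R]_8 -> Prop) : Prop :=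
  forall A, V A -> A != 0 -> A \in unitmx.

(* With J : 'I_7 -> 'M_8 (J i = J_{i+1}):
   V7 J = (J_1,...,J_6, J_6 J_7), S5 J = (J_1..J_5), S2 J = (J_6, J_6 J_7). *)
Definition V7 (J : 'I_7 -> 'M[R]_8) : 'I_7 -> 'M[R]_8 :=
  fun i => if (i : nat) == 6%N then J (inord 5) *m J (inord 6) else J i.
Definition S5 (J : 'I_7 -> 'M[R]_8) : 'I_5 -> 'M[R]_8 := fun i => J (inord i).
Definition S2 (J : 'I_7 -> 'M[R]_8) : 'I_2 -> 'M[R]_8 :=
  fun i => if (i : nat) == 0%N then J (inord 5) else J (inord 5) *m J (inord 6).

End Defs.

From HB Require Import structures.
From mathcomp Require Import all_boot all_order all_algebra.
From mathcomp Require Import reals ring.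
Import Order.TTheory GRing.Theory Num.Theory.
Set Implicit Arguments.
Unset Strict Implicit.
Unset Printing Implicit Defensive.

Local Open Scope ring_scope.

(* Write J = A + B with A in Span(J_1..J_5) and B in Span(J_6, J_6 J_7), and look
   for N = J_7 M with M orthogonal, commuting with J_6 and J_7 and normalising
   Span(J_1..J_5).  Conjugation by J_7 negates J_1..J_5, J_6 and J_6 J_7, so
   conjugation by N is -(Ad M) on the first summand and -1 on the second; hence N
   preserves V and its inner product.  Take M = |al|^-2 al be for Clifford vectors
   al, be of Span(J_1..J_5) of equal length orthogonal to A: then Ad M fixes A, so
   N anticommutes with J, and N X = -X reduces to be X = - al (J_7 X).  Together
   with al.A = be.A = 0 this is a square system of 10 equations in the 10
   unknowns (al, be) whose transpose kills (J_7 X, 0, 0), so it has a nonzero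
   solution, and comparing norms gives |al| = |be|.  Finally J_1 + J_6 J_7 is a
   nonzero singular element of V: J_6 J_7 commutes with J_1 and squares to -1, so
   P = J_1 J_6 J_7 is an involution and J_1 + J_6 J_7 = J_1 (1 - P). *)

Lemma left_kernel_nonzero (F : fieldType) p q (A : 'M[F]_(p, q)) (w : 'cV_q) :
  (q <= p)%N -> w != 0 -> A *m w = 0 -> exists2 v : 'rV_p, v != 0 & v *m A = 0.
Proof.
move=> le_qp w_neq0 Aw0.
have rkA : (\rank A < q)%N.
  have : (w^T <= kermx A^T)%MS by apply/sub_kermxP; rewrite -trmx_mul Aw0 trmx0.
  by move/mxrankS; rewrite mxrank_ker mxrank_tr rank_rV trmx_eq0 w_neq0 subn_gt0.
exists (nz_row (kermx A)); last exact/sub_kermxP/nz_row_sub.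
rewrite nz_row_eq0 -mxrank_eq0 mxrank_ker subn_eq0 -ltnNge.
exact: leq_trans rkA le_qp.
Qed.

Section RealMatrices.
Variables (R : realFieldType) (n : nat).
Implicit Types (M N P T : 'M[R]_n) (X : 'cV[R]_n).

Lemma orthogonal_invmx N : N^T *m N = 1%:M -> invmx N = N^T.
Proof.
move=> NtN; have [_ N_unit] := mulmx1_unit NtN.
by rewrite -[invmx N]mul1mx -NtN -mulmxA mulmxV // mulmx1.
Qed.

Lemma orthogonal_mul M N : M^T *m M = 1%:M -> N^T *m N = 1%:M ->
  (M *m N)^T *m (M *m N) = 1%:M.
Proof. by move=> MtM NtN; rewrite trmx_mul mulmxA -(mulmxA N^T) MtM mulmx1. Qed.

Lemma skew_quadratic_form0 T X : T^T = - T -> X^T *m T *m X = 0.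
Proof.
move=> T_skew; set q := X^T *m T *m X.
have q_skew : q^T = - q by rewrite /q !trmx_mul trmxK T_skew mulNmx mulmxN mulmxA.
have q_sym : q^T = q by apply/matrixP => i j; rewrite !ord1 mxE.
have : 2%:R *: q = 0 by rewrite scaler_nat mulr2n -{1}q_sym q_skew addNr.
by move/eqP; rewrite scaler_eq0 pnatr_eq0 => /eqP.
Qed.

Lemma cV_norm_gt0 X : X != 0 -> 0 < (X^T *m X) 0 0.
Proof.
move=> X_neq0; have sq_ge0 j : 0 <= X j 0 ^+ 2 := sqr_ge0 _.
have -> : (X^T *m X) 0 0 = \sum_j X j 0 ^+ 2.
  by rewrite mxE; apply: eq_bigr => j _; rewrite mxE expr2.
rewrite lt0r sumr_ge0 // andbT; apply: contra X_neq0 => /eqP/psumr_eq0P sum0.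
apply/eqP/matrixP => i j; rewrite ord1 mxE.
by apply/eqP; rewrite -sqrf_eq0 sum0.
Qed.

Lemma involution_eqN1 P : P *m P = 1%:M -> 1%:M - P \in unitmx -> P = - 1%:M.
Proof.
move=> PP unit_1P; apply/eqP; rewrite -addr_eq0 addrC.
have sq0 : (1%:M - P) *m (1%:M + P) = 0.
  by rewrite mulmxBl !mulmxDr !mul1mx mulmx1 PP [P + _]addrC subrr.
by rewrite -(mulKmx unit_1P (1%:M + P)) sq0 mulmx0.
Qed.

End RealMatrices.

Section LinearCombinations.
Variables (R : realFieldType) (m n : nat).
Implicit Types (B E : 'I_m -> 'M[R]_n) (a b : 'I_m -> R).

Definition lincomb B a : 'M[R]_n := \sum_(i < m) a i *: B i.

Definition dotc a b : R := \sum_(i < m) a i * b i.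

Lemma lincomb0 B : lincomb B (fun=> 0) = 0.
Proof. by rewrite /lincomb big1 // => i _; rewrite scale0r. Qed.

Lemma lincombN B a : - lincomb B a = lincomb B (fun i => - a i).
Proof. by rewrite /lincomb -sumrN; apply: eq_bigr => i _; rewrite scaleNr. Qed.

Lemma lincombZ B c a : c *: lincomb B a = lincomb B (fun i => c * a i).
Proof. by rewrite /lincomb scaler_sumr; apply: eq_bigr => i _; rewrite scalerA. Qed.

Lemma lincombD B a b : lincomb B a + lincomb B b = lincomb B (fun i => a i + b i).
Proof. by rewrite /lincomb -big_split; apply: eq_bigr => i _; rewrite scalerDl. Qed.

Lemma lincomb_tr B a : (lincomb B a)^T = lincomb (fun i => (B i)^T) a.
Proof. by rewrite /lincomb raddf_sum; apply: eq_bigr => i _; exact: linearZ. Qed.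

Lemma conj_lincomb (P Q : 'M[R]_n) B a :
  P *m lincomb B a *m Q = lincomb (fun i => P *m B i *m Q) a.
Proof.
rewrite /lincomb mulmx_sumr mulmx_suml; apply: eq_bigr => i _.
by rewrite -scalemxAr -scalemxAl.
Qed.

Lemma anticomm_lincomb (K : 'M[R]_n) B a :
  (forall i, K *m B i = - (B i *m K)) -> K *m lincomb B a = - (lincomb B a *m K).
Proof.
move=> K_anti; rewrite /lincomb mulmx_sumr mulmx_suml -sumrN.
by apply: eq_bigr => i _; rewrite -scalemxAr -scalemxAl K_anti scalerN.
Qed.

Lemma lincomb_delta B i : lincomb B (fun j => (j == i)%:R) = B i.
Proof.
rewrite /lincomb (bigD1 i) //= eqxx scale1r big1 ?addr0 // => j /negbTE ->.
by rewrite scale0r.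
Qed.

Lemma dotc_ge0 a : 0 <= dotc a a.
Proof. by apply: sumr_ge0 => i _; rewrite -expr2 sqr_ge0. Qed.

Lemma dotc_eq0 a : (dotc a a == 0) = [forall i, a i == 0].
Proof.
apply/eqP/forallP => [a0 i|a0]; last first.
  by rewrite /dotc big1 // => i _; rewrite (eqP (a0 i)) mul0r.
have /psumr_eq0P a2_0 : \sum_i a i ^+ 2 = 0.
  by rewrite -[RHS]a0; apply: eq_bigr => j _; rewrite expr2.
by rewrite -sqrf_eq0 a2_0 // => j _; exact: sqr_ge0.
Qed.

End LinearCombinations.

Section Kernel.
Variables (R : realFieldType) (m n : nat) (E : 'I_m -> 'M[R]_n).

Lemma lincomb_kernel (X Y : 'cV[R]_n) (a : 'I_m -> R) :
  (n + 2 <= m + m)%N -> Y != 0 ->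
  (forall i, (E i *m Y)^T *m Y = 0) -> (forall i, (E i *m X)^T *m Y = 0) ->
  exists al be : 'I_m -> R, [/\ dotc al al + dotc be be != 0,
    lincomb E al *m Y + lincomb E be *m X = 0, dotc al a = 0 & dotc be a = 0].
Proof.
move=> dim_le Y_neq0 EY_Y EX_Y.
pose rows Z : 'M_(m, n) := \matrix_i (E i *m Z)^T.
have rowsE (v : 'rV_m) Z : v *m rows Z = (lincomb E (fun i => v 0 i) *m Z)^T.
  rewrite mulmx_sum_row /lincomb mulmx_suml raddf_sum; apply: eq_bigr => i _.
  by rewrite rowK -scalemxAl /= linearZ.
have rows_mul Z : (forall i, (E i *m Z)^T *m Y = 0) -> rows Z *m Y = 0.
  by move=> EZ_Y; apply/row_matrixP => i; rewrite row_mul rowK row0.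
pose ac : 'cV_m := \col_i a i.
have acE (v : 'rV_m) : v *m ac = (dotc (fun i => v 0 i) a)%:M.
  by apply/matrixP => i j; rewrite !ord1 !mxE; apply: eq_bigr => k _; rewrite mxE.
(* For v = (al, be), v *m Psi is the row
   ((lincomb E al *m Y + lincomb E be *m X)^T, dotc al a, dotc be a). *)
pose Psi := block_mx (rows Y) (row_mx ac 0) (rows X) (row_mx 0 ac).
have [w w_neq0] : exists2 w : 'rV_(m + m), w != 0 & w *m Psi = 0.
  apply: (left_kernel_nonzero dim_le (w := col_mx Y 0)).
    by rewrite col_mx_eq0 negb_and Y_neq0.
  by rewrite mul_block_col !mulmx0 !addr0 !rows_mul // col_mx0.
rewrite -[w]hsubmxK mul_row_block !mul_mx_row !mulmx0 add_row_mx addr0 add0r.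
rewrite !rowsE !acE -raddfD /= => /eqP; rewrite !row_mx_eq0 trmx_eq0.
case/and3P => /eqP comb0 /eqP/matrixP/(_ 0 0) + /eqP/matrixP/(_ 0 0).
rewrite !mxE /= !mulr1n => dal dbe.
exists (fun i => lsubmx w 0 i), (fun i => rsubmx w 0 i); split => //.
move: w_neq0; apply: contra; rewrite paddr_eq0 ?dotc_ge0 // !dotc_eq0.
case/andP => /forallP al0 /forallP be0; rewrite -[w]hsubmxK row_mx_eq0.
by apply/andP; split; apply/eqP/rowP => i; rewrite [RHS]mxE; apply/eqP.
Qed.

End Kernel.

Section CliffordFamily.
Variables (R : realFieldType) (m n : nat) (E : 'I_m -> 'M[R]_n).
Hypothesis E_sq : forall i, E i *m E i = - 1%:M.
Hypothesis E_skew : forall i, (E i)^T = - E i.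
Hypothesis E_anti : forall i j, i != j -> E i *m E j = - (E j *m E i).
Implicit Types (a b k : 'I_m -> R) (X Y Z : 'cV[R]_n).
Local Notation clif := (lincomb E).

Lemma clif_anticomm a b :
  clif a *m clif b + clif b *m clif a = - (2 * dotc a b) *: 1%:M.
Proof.
have E_sym i j : E i *m E j + E j *m E i = (if i == j then - 2 else 0) *: 1%:M.
  case: eqP => [->|/eqP ij]; last by rewrite E_anti // addNr scale0r.
  by rewrite E_sq scaleNr scaler_nat mulr2n opprD.
have clif_mul c d : clif c *m clif d
    = \sum_i \sum_j (c i * d j) *: (E i *m E j).
  rewrite /lincomb mulmx_suml; apply: eq_bigr => i _.
  rewrite -scalemxAl mulmx_sumr scaler_sumr; apply: eq_bigr => j _.
  by rewrite -scalemxAr scalerA.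
rewrite !clif_mul [X in _ + X]exchange_big -big_split /dotc mulr_sumr.
rewrite scaleNr scaler_suml -sumrN; apply: eq_bigr => i _; rewrite -big_split.
rewrite (bigD1 i) //= big1 => [|j /negbTE ji].
  rewrite addr0 mulrC -scalerDr E_sym eqxx scalerA -scaleNr; congr (_ *: _); ring.
by rewrite [b j * _]mulrC -scalerDr E_sym eq_sym ji scale0r scaler0.
Qed.

Lemma clif_sq a : clif a *m clif a = - dotc a a *: 1%:M.
Proof.
have two_neq0 : (2 : R) != 0 by rewrite pnatr_eq0.
apply: (scalerI two_neq0); rewrite scaler_nat mulr2n clif_anticomm.
by rewrite scalerA mulrN.
Qed.

Lemma clif_tr a : (clif a)^T = - clif a.
Proof.
rewrite lincomb_tr lincombN /lincomb; apply: eq_bigr => i _.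
by rewrite E_skew scalerN scaleNr.
Qed.

Lemma clif_sandwich a k :
  clif a *m clif k *m clif a = clif (fun i => dotc a a * k i - 2 * dotc a k * a i).
Proof.
have ak : clif a *m clif k = - (clif k *m clif a) - (2 * dotc a k) *: 1%:M.
  by rewrite -scaleNr -clif_anticomm addrCA addNr addr0.
rewrite ak mulmxBl mulNmx -mulmxA clif_sq -scalemxAr mulmx1 scaleNr opprK.
by rewrite -scalemxAl mul1mx !lincombZ lincombN lincombD.
Qed.

Lemma clif_sandwich_orth a k : dotc a k = 0 ->
  clif a *m clif k *m clif a = dotc a a *: clif k.
Proof.
move=> ak0; have := clif_anticomm a k; rewrite ak0 mulr0 oppr0 scale0r.
move/eqP; rewrite addr_eq0 => /eqP ->.
by rewrite mulNmx -mulmxA clif_sq -scalemxAr mulmx1 scaleNr opprK.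
Qed.

Lemma clif_norm a Z : (clif a *m Z)^T *m (clif a *m Z) = dotc a a *: (Z^T *m Z).
Proof.
rewrite trmx_mul clif_tr mulmxN mulNmx !mulmxA -(mulmxA Z^T) clif_sq.
by rewrite -scalemxAr mulmx1 scaleNr mulNmx opprK scalemxAl.
Qed.

Section Rotation.
Variables al be : 'I_m -> R.
Hypothesis norm_eq : dotc al al = dotc be be.
Hypothesis norm_neq0 : dotc al al != 0.

Definition clif_rot : 'M[R]_n := (dotc al al)^-1 *: (clif al *m clif be).

Lemma clif_rot_tr : clif_rot^T = (dotc al al)^-1 *: (clif be *m clif al).
Proof. by rewrite linearZ /= trmx_mul !clif_tr mulNmx mulmxN opprK. Qed.

Lemma clif_rot_conj k :
  clif_rot *m clif k *m clif_rot^T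
  = (dotc al al)^-2 *: (clif al *m (clif be *m clif k *m clif be) *m clif al).
Proof.
rewrite clif_rot_tr -!scalemxAl -scalemxAr scalerA -expr2 exprVn.
by rewrite !mulmxA.
Qed.

Lemma clif_rot_orthogonal : clif_rot^T *m clif_rot = 1%:M.
Proof.
rewrite clif_rot_tr -!scalemxAl -scalemxAr scalerA !mulmxA.
rewrite -(mulmxA (clif be)) clif_sq -scalemxAr mulmx1 -scalemxAl clif_sq.
rewrite -norm_eq !scalerA -[RHS]scale1r; congr (_ *: _).
by field.
Qed.

Lemma clif_rot_comm K : (forall i, K *m E i = - (E i *m K)) ->
  clif_rot *m K = K *m clif_rot.
Proof.
move=> K_anti; have anti c := anticomm_lincomb c K_anti.
rewrite -scalemxAl -scalemxAr; congr (_ *: _).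
by rewrite -mulmxA -[_ *m K]opprK -anti mulmxN mulmxA -mulNmx -anti mulmxA.
Qed.

Lemma clif_rot_conj_clif k : exists k', clif_rot *m clif k *m clif_rot^T = clif k'.
Proof. by rewrite clif_rot_conj !clif_sandwich lincombZ; eexists. Qed.

Lemma clif_rot_conj_orth a : dotc al a = 0 -> dotc be a = 0 ->
  clif_rot *m clif a *m clif_rot^T = clif a.
Proof.
move=> al_a be_a; rewrite clif_rot_conj clif_sandwich_orth //.
rewrite -scalemxAr -scalemxAl clif_sandwich_orth // !scalerA -norm_eq.
by rewrite -[RHS]scale1r; congr (_ *: _); field.
Qed.

Lemma clif_rot_mul X Y : clif be *m X = - (clif al *m Y) -> clif_rot *m X = Y.
Proof.
move=> beX; rewrite -scalemxAl -mulmxA beX mulmxN mulmxA clif_sq scaleNr mulNmx.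
by rewrite opprK -scalemxAl mul1mx scalerA mulVf // scale1r.
Qed.

End Rotation.

Lemma exists_clif_rot (K : 'M[R]_n) X a : (n + 2 <= m + m)%N ->
  K^T = - K -> K^T *m K = 1%:M -> (forall i, K *m E i = - (E i *m K)) -> X != 0 ->
  exists al be, [/\ dotc al al = dotc be be, dotc al al != 0,
    dotc al a = 0, dotc be a = 0 & clif_rot al be *m X = K *m X].
Proof.
move=> dim_le K_skew K_orth K_anti X_neq0; set Y := K *m X.
have Y_neq0 : Y != 0.
  by apply: contraNneq X_neq0 => Y0; rewrite -[X]mul1mx -K_orth -mulmxA -/Y Y0 mulmx0.
have EY_Y i : (E i *m Y)^T *m Y = 0.
  by rewrite trmx_mul skew_quadratic_form0 // trmxK E_skew opprK.
have EX_Y i : (E i *m X)^T *m Y = 0.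
  rewrite trmx_mul /Y mulmxA -(mulmxA X^T) skew_quadratic_form0 //.
  by rewrite trmx_mul trmxK K_skew E_skew !mulNmx K_anti.
have [al [be [nz comb0 al_a be_a]]] := lincomb_kernel a dim_le Y_neq0 EY_Y EX_Y.
have beX : clif be *m X = - (clif al *m Y) by apply/eqP; rewrite -addr_eq0 addrC comb0.
have norm_eq : dotc al al = dotc be be.
  have : (clif be *m X)^T *m (clif be *m X) = (clif al *m Y)^T *m (clif al *m Y).
    by rewrite beX mulmxN linearN /= mulNmx opprK.
  rewrite !clif_norm trmx_mul mulmxA -(mulmxA X^T) K_orth mulmx1.
  have nX_neq0 : X^T *m X != 0.
    by apply: contraTneq (cV_norm_gt0 X_neq0) => ->; rewrite mxE ltxx.
  move/eqP; rewrite -subr_eq0 -scalerBl scaler_eq0 (negbTE nX_neq0) orbF.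
  by rewrite subr_eq0 eq_sym => /eqP.
have al_neq0 : dotc al al != 0.
  by apply: contraNneq nz => al0; rewrite -norm_eq al0 addr0.
by exists al, be; split => //; apply: clif_rot_mul.
Qed.

End CliffordFamily.

Lemma std_form_conj (R : realType) (M K L : 'M[R]_8) : M^T *m M = 1%:M ->
  std_form (M *m K *m M^T) (M *m L *m M^T) = std_form K L.
Proof.
move=> MtM; rewrite /std_form !mulmxA -(mulmxA _ M^T) MtM mulmx1.
by rewrite mxtrace_mulC !mulmxA MtM mul1mx.
Qed.

Lemma std_formNN (R : realType) (K L : 'M[R]_8) : std_form (- K) (- L) = std_form K L.
Proof. by rewrite /std_form mulNmx mulmxN opprK. Qed.

Section InnerProduct.
Variables (R : realType) (p : nat) (B : 'I_p -> 'M[R]_8).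
Variable ip : 'M[R]_8 -> 'M[R]_8 -> R.
Hypothesis ip_inner : inner_product_on (in_span B) ip.
Local Notation V := (in_span B).

Lemma in_span_lincomb a : V (lincomb B a).
Proof. by exists a. Qed.

Lemma in_spanD x y : V x -> V y -> V (x + y).
Proof. by move=> [a ->] [b ->]; rewrite lincombD; apply: in_span_lincomb. Qed.

Lemma in_spanN x : V x -> V (- x).
Proof. by move=> [a ->]; rewrite lincombN; apply: in_span_lincomb. Qed.

Lemma in_span0 : V 0.
Proof. by rewrite -(lincomb0 B); apply: in_span_lincomb. Qed.

Lemma ip_addl x y z : V x -> V y -> V z -> ip (x + y) z = ip x z + ip y z.
Proof.
have [lin _ _] := ip_inner.
by move=> Vx Vy Vz; rewrite -{1}[x]scale1r lin // mul1r.
Qed.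

Lemma ip_sym x y : V x -> V y -> ip x y = ip y x.
Proof. by have [_ sym _] := ip_inner; apply: sym. Qed.

Lemma ip_addr x y z : V x -> V y -> V z -> ip z (x + y) = ip z x + ip z y.
Proof.
move=> Vx Vy Vz; rewrite [LHS]ip_sym ?ip_addl ?(ip_sym _ Vz) //; exact: in_spanD.
Qed.

Lemma ip_oppl x z : V x -> V z -> ip (- x) z = - ip x z.
Proof.
move=> Vx Vz; have ip0 : ip 0 z = 0.
  by apply: (addrI (ip 0 z)); rewrite -ip_addl ?addr0 //; apply: in_span0.
by apply/eqP; rewrite -addr_eq0 -ip_addl ?addNr ?ip0 //; exact: in_spanN.
Qed.

Lemma ip_opp x z : V x -> V z -> ip (- x) (- z) = ip x z.
Proof.
move=> Vx Vz; have VNz := in_spanN Vz.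
by rewrite ip_oppl // ip_sym // ip_oppl // ip_sym // opprK.
Qed.

End InnerProduct.

Section SevenStructures.
Variables (R : realType) (J : 'I_7 -> 'M[R]_8).
Hypothesis J_ocs : forall i, ocs (J i).
Hypothesis J_anti : forall i j, i != j -> J i *m J j = - (J j *m J i).
Local Notation J6 := (J (inord 5%N)).
Local Notation J7 := (J (inord 6%N)).

Lemma J_orth i : (J i)^T *m J i = 1%:M.
Proof. by case: (J_ocs i). Qed.

Lemma J_sq i : J i *m J i = - 1%:M.
Proof. by case: (J_ocs i). Qed.

Lemma J_skew i : (J i)^T = - J i.
Proof.
by rewrite -[_^T]mulmx1 -[1%:M]opprK -(J_sq i) mulmxN mulmxA J_orth mul1mx.
Qed.

Lemma J_noncomm i j : i != j -> J i *m J j != J j *m J i.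
Proof.
move=> ij; apply/eqP => comm.
have JiJj0 : J i *m J j = 0.
  have : (2%:R : R) *: (J i *m J j) = 0.
    by rewrite scaler_nat mulr2n {2}comm (J_anti ij) addNr.
  by move/eqP; rewrite scaler_eq0 pnatr_eq0 => /eqP.
have Jj0 : J j = 0.
  by rewrite -[J j]mul1mx -[1%:M]opprK -(J_sq i) mulNmx -mulmxA JiJj0 mulmx0 oppr0.
have := J_sq j; rewrite Jj0 mul0mx => /eqP; rewrite eq_sym oppr_eq0.
by rewrite (negbTE (matrix_nonzero1 _ _)).
Qed.

Lemma lshift_neq_inord (i : 'I_5) k : (5 <= k < 7)%N -> lshift 2 i != inord k :> 'I_7.
Proof.
case/andP=> k_ge5 k_lt7; apply/eqP => /(congr1 val); rewrite /= inordK //.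
by move=> ik; move: (ltn_ord i); rewrite ik ltnNge k_ge5.
Qed.

Lemma S5E i : S5 J i = J (lshift 2 i).
Proof. by congr J; apply: val_inj; rewrite /= inordK // (leq_trans (ltn_ord i)). Qed.

Lemma S5_sq i : S5 J i *m S5 J i = - 1%:M.
Proof. by rewrite S5E J_sq. Qed.

Lemma S5_skew i : (S5 J i)^T = - S5 J i.
Proof. by rewrite S5E J_skew. Qed.

Lemma S5_anti i j : i != j -> S5 J i *m S5 J j = - (S5 J j *m S5 J i).
Proof. by move=> ij; rewrite !S5E J_anti // (inj_eq (@lshift_inj 5 2)). Qed.

Lemma S5_noncomm i j : i != j -> S5 J i *m S5 J j != S5 J j *m S5 J i.
Proof. by move=> ij; rewrite !S5E J_noncomm // (inj_eq (@lshift_inj 5 2)). Qed.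

Lemma J_anti_S5 k i : (5 <= k < 7)%N -> J (inord k) *m S5 J i = - (S5 J i *m J (inord k)).
Proof. by move=> k_hi; rewrite S5E J_anti // eq_sym lshift_neq_inord. Qed.

Lemma V7_lshift (i : 'I_5) : V7 J (lshift 2 i) = S5 J i.
Proof. by rewrite /V7 S5E /= ifN // neq_ltn (leq_trans (ltn_ord i)). Qed.

Lemma V7_rshift (j : 'I_2) : V7 J (rshift 5 j) = S2 J j.
Proof.
rewrite /V7 /S2 /=; case: j => [[|[|//]] j_lt] //=.
by congr J; apply: val_inj; rewrite /= inordK.
Qed.

Lemma lincomb_V7 a :
  lincomb (V7 J) a
  = lincomb (S5 J) (a \o @lshift 5 2) + lincomb (S2 J) (a \o @rshift 5 2).
Proof.
rewrite /lincomb (@big_split_ord _ _ _ 5 2) /=.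
by congr (_ + _); apply: eq_bigr => i _; rewrite ?V7_lshift ?V7_rshift.
Qed.

Lemma in_span_V7 K : in_span (V7 J) K <->
  exists k b, K = lincomb (S5 J) k + lincomb (S2 J) b.
Proof.
split=> [[a ->]|[k [b ->]]]; first by do 2!eexists; exact: lincomb_V7.
exists (fun i : 'I_(5 + 2) => match split i with inl i => k i | inr j => b j end).
rewrite -[RHS]/(lincomb _ _) lincomb_V7; congr (_ + _); apply: eq_bigr => i _ /=.
  by rewrite (unsplitK (inl _ i)).
by rewrite (unsplitK (inr _ i)).
Qed.

Lemma J67_comm_S5 i : S5 J i *m (J6 *m J7) = J6 *m J7 *m S5 J i.
Proof.
have S5_J k : (5 <= k < 7)%N -> S5 J i *m J (inord k) = - (J (inord k) *m S5 J i).
  by move=> k_hi; rewrite J_anti_S5 ?opprK.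
by rewrite mulmxA (S5_J 5%N) // mulNmx -[in LHS]mulmxA (S5_J 6%N) // mulmxN opprK mulmxA.
Qed.

Lemma J67_sq : J6 *m J7 *m (J6 *m J7) = - 1%:M.
Proof.
have J76 : J7 *m J6 = - (J6 *m J7).
  by rewrite J_anti ?opprK //; apply/eqP => /(congr1 val); rewrite /= !inordK.
rewrite mulmxA -(mulmxA J6) J76 mulmxN mulNmx !mulmxA (J_sq (inord 5%N)).
by rewrite mulNmx mul1mx mulNmx opprK (J_sq (inord 6%N)).
Qed.

Lemma not_nonsingular_V7 : ~ nonsingular (in_span (V7 J)).
Proof.
set Q := J6 *m J7; set J1 := S5 J 0.
have Q_neq M : M = J1 \/ M = - J1 -> M *m S5 J 1 = S5 J 1 *m M -> False.
  move=> M_J1 comm; apply: (negP (S5_noncomm (i := 0) (j := 1) isT)).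
  by case: M_J1 comm => -> /eqP //; rewrite mulNmx mulmxN eqr_opp.
have Q_comm1 : Q *m S5 J 1 = S5 J 1 *m Q by rewrite /Q J67_comm_S5.
move/(_ (J1 + Q)) => nonsing.
have /nonsing : in_span (V7 J) (J1 + Q).
  apply/in_span_V7; exists (fun i => (i == 0)%:R), (fun j => (j == 1)%:R).
  by rewrite !lincomb_delta.
have A_neq0 : J1 + Q != 0.
  apply/eqP => A0; apply: (Q_neq Q) Q_comm1; right.
  by apply/eqP; rewrite -addr_eq0 addrC A0.
move/(_ A_neq0); set P := J1 *m Q.
have -> : J1 + Q = J1 *m (1%:M - P).
  by rewrite mulmxBr mulmx1 mulmxA S5_sq mulNmx mul1mx opprK.
rewrite unitmx_mul => /andP[_] /(involution_eqN1 _) P_inv.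
have PP : P *m P = 1%:M.
  rewrite /P mulmxA -(mulmxA J1) -J67_comm_S5 mulmxA S5_sq mulNmx mul1mx.
  by rewrite mulNmx J67_sq opprK.
apply: (Q_neq Q) Q_comm1; left; have := congr1 (mulmx J1) (P_inv PP).
by rewrite mulmxA S5_sq mulNmx mul1mx mulmxN mulmx1 => /oppr_inj.
Qed.

Section WSPair.
Variable ip : 'M[R]_8 -> 'M[R]_8 -> R.
Variable c : R.
Hypothesis ip_inner : inner_product_on (in_span (V7 J)) ip.
Hypothesis ip_S5 : forall K L, in_span (S5 J) K -> in_span (S5 J) L ->
  ip K L = c * std_form K L.
Hypothesis ip_S5_S2 : forall K L, in_span (S5 J) K -> in_span (S2 J) L -> ip K L = 0.

Lemma in_span_V7_S5 k : in_span (V7 J) (lincomb (S5 J) k).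
Proof. by apply/in_span_V7; exists k, (fun=> 0); rewrite lincomb0 addr0. Qed.

Lemma in_span_V7_S2 b : in_span (V7 J) (lincomb (S2 J) b).
Proof. by apply/in_span_V7; exists (fun=> 0), b; rewrite lincomb0 add0r. Qed.

Lemma ip_V7 k1 b1 k2 b2 :
  ip (lincomb (S5 J) k1 + lincomb (S2 J) b1) (lincomb (S5 J) k2 + lincomb (S2 J) b2)
  = c * std_form (lincomb (S5 J) k1) (lincomb (S5 J) k2)
    + ip (lincomb (S2 J) b1) (lincomb (S2 J) b2).
Proof.
have [[[V51 V52] V21] V22] :=
  (in_span_V7_S5 k1, in_span_V7_S5 k2, in_span_V7_S2 b1, in_span_V7_S2 b2).
have S5_S2 k b := ip_S5_S2 (in_span_lincomb _ k) (in_span_lincomb _ b).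
have V_2 := in_spanD V52 V22.
rewrite (ip_addl ip_inner) // !(ip_addr ip_inner) //.
rewrite (ip_S5 (in_span_lincomb _ k1) (in_span_lincomb _ k2)) S5_S2.
by rewrite (ip_sym ip_inner V21 V52) S5_S2 addr0 add0r.
Qed.

Section ConjugationByN.
Variable M : 'M[R]_8.
Hypothesis M_orth : M^T *m M = 1%:M.
Hypothesis M_comm6 : M *m J6 = J6 *m M.
Hypothesis M_comm7 : M *m J7 = J7 *m M.
Local Notation N := (J7 *m M).

Lemma N_orth : N^T *m N = 1%:M.
Proof. by apply: orthogonal_mul => //; apply: J_orth. Qed.

Lemma N_conj_mul A B : N *m (A *m B) *m N^T = (N *m A *m N^T) *m (N *m B *m N^T).
Proof. by rewrite -{1}[A]mulmx1 -N_orth !mulmxA. Qed.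

Lemma trM_comm7 : M^T *m J7 = J7 *m M^T.
Proof.
have := congr1 trmx M_comm7; rewrite !trmx_mul J_skew => comm.
by apply/oppr_inj; rewrite -mulmxN -mulNmx.
Qed.

Lemma N_conj_S5 k : N *m lincomb (S5 J) k *m N^T = - (M *m lincomb (S5 J) k *m M^T).
Proof.
have J7_S5 : J7 *m lincomb (S5 J) k = - (lincomb (S5 J) k *m J7).
  by apply: anticomm_lincomb => i; apply: J_anti_S5.
rewrite trmx_mul J_skew !mulmxN -M_comm7 -(mulmxA M) J7_S5 mulmxN mulNmx opprK.
by rewrite trM_comm7 !mulmxA -(mulmxA _ J7 J7) J_sq mulmxN mulmx1 mulNmx.
Qed.

Lemma N_conj_comm K : M *m K = K *m M -> N *m K *m N^T = J7 *m K *m J7^T.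
Proof.
move=> MK; rewrite trmx_mul -(mulmxA J7 M K) MK !mulmxA -(mulmxA _ M M^T).
by rewrite (mulmx1C M_orth) mulmx1.
Qed.

Lemma N_conj_S2 b : N *m lincomb (S2 J) b *m N^T = - lincomb (S2 J) b.
Proof.
have J76 : J7 *m J6 = - (J6 *m J7).
  by rewrite J_anti //; apply/eqP => /(congr1 val); rewrite /= !inordK.
have conj6 : N *m J6 *m N^T = - J6.
  rewrite N_conj_comm // J_skew mulmxN J76 mulNmx -mulmxA J_sq.
  by rewrite mulmxN mulmx1 opprK.
have conj7 : N *m J7 *m N^T = J7.
  by rewrite N_conj_comm // J_sq mulNmx mul1mx J_skew opprK.
rewrite conj_lincomb lincombN; apply: eq_bigr => j _; rewrite scaleNr -scalerN.
congr (_ *: _); rewrite /S2; case: ifP => _ //.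
by rewrite N_conj_mul conj6 conj7 mulNmx.
Qed.

Hypothesis M_conj_S5 : forall k, exists k',
  M *m lincomb (S5 J) k *m M^T = lincomb (S5 J) k'.

Lemma N_conj_V7 k b : exists k',
  N *m (lincomb (S5 J) k + lincomb (S2 J) b) *m N^T
  = lincomb (S5 J) k' + lincomb (S2 J) (fun j => - b j).
Proof.
have [k' Mk] := M_conj_S5 k; exists (fun i => - k' i).
by rewrite mulmxDr mulmxDl N_conj_S5 N_conj_S2 Mk !lincombN.
Qed.

Lemma N_in_NV : in_NV (in_span (V7 J)) ip N.
Proof.
rewrite /in_NV (orthogonal_invmx N_orth); split=> [|K|K L]; first exact: N_orth.
  move=> /in_span_V7[k [b ->]]; have [k' ->] := N_conj_V7 k b.
  by apply/in_span_V7; do 2!eexists.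
move=> /in_span_V7[k1 [b1 ->]] /in_span_V7[k2 [b2 ->]].
have [k1' Mk1] := M_conj_S5 k1; have [k2' Mk2] := M_conj_S5 k2.
rewrite !mulmxDr !mulmxDl !N_conj_S5 !N_conj_S2 Mk1 Mk2 !lincombN !ip_V7.
rewrite -!lincombN std_formNN -Mk1 -Mk2 std_form_conj // (ip_opp ip_inner) //.
all: exact: in_span_V7_S2.
Qed.

Lemma N_anticomm a b : M *m lincomb (S5 J) a *m M^T = lincomb (S5 J) a ->
  N *m (lincomb (S5 J) a + lincomb (S2 J) b)
  = - ((lincomb (S5 J) a + lincomb (S2 J) b) *m N).
Proof.
move=> Ma; rewrite -[LHS]mulmx1 -N_orth mulmxA mulmxDr mulmxDl.
by rewrite N_conj_S5 N_conj_S2 Ma -opprD mulNmx.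
Qed.

Lemma N_witness a b (X : 'cV[R]_8) :
  M *m lincomb (S5 J) a *m M^T = lincomb (S5 J) a -> M *m X = J7 *m X ->
  [/\ in_NV (in_span (V7 J)) ip N, N *m X = - X
     & N *m (lincomb (S5 J) a + lincomb (S2 J) b)
       = - ((lincomb (S5 J) a + lincomb (S2 J) b) *m N)].
Proof.
move=> Ma MX; split; [exact: N_in_NV | | exact: N_anticomm].
by rewrite -mulmxA MX mulmxA J_sq mulNmx mul1mx.
Qed.

End ConjugationByN.

Lemma WS_pair_V7 : WS_pair (in_span (V7 J)) ip.
Proof.
move=> K X /in_span_V7[a [b ->]].
have J7_S5 i : J7 *m S5 J i = - (S5 J i *m J7) by apply: J_anti_S5.
have [X0 | X_neq0] := eqVneq X 0.
  exists (J7 *m 1%:M); apply: N_witness; rewrite ?trmx1 ?mul1mx ?mulmx1 ?X0 ?mulmx0 //.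
  by move=> k; exists k; rewrite mul1mx mulmx1.
have [al [be [norm_eq al_neq0 al_a be_a rotX]]] :=
  exists_clif_rot S5_sq S5_skew S5_anti a isT (J_skew _) (J_orth _) J7_S5 X_neq0.
exists (J7 *m clif_rot (S5 J) al be); apply: N_witness => //.
- exact: (clif_rot_orthogonal S5_sq S5_skew S5_anti).
- by apply: clif_rot_comm => i; apply: J_anti_S5.
- exact: clif_rot_comm.
- exact: (clif_rot_conj_clif S5_sq S5_skew S5_anti).
- exact: (clif_rot_conj_orth S5_sq S5_skew S5_anti).
Qed.

End WSPair.

End SevenStructures.

Theorem mainTheorem12 (R : realType) (J : 'I_7 -> 'M[R]_8)
    (ip : 'M[R]_8 -> 'M[R]_8 -> R) :
  (forall i, ocs (J i)) ->
  (forall i j, i != j -> J i *m J j = - (J j *m J i)) ->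
  inner_product_on (in_span (V7 J)) ip ->
  (exists c : R, 0 < c /\
     forall K L, in_span (S5 J) K -> in_span (S5 J) L -> ip K L = c * std_form K L) ->
  (forall K L, in_span (S5 J) K -> in_span (S2 J) L -> ip K L = 0) ->
  WS_pair (in_span (V7 J)) ip /\ ~ nonsingular (in_span (V7 J)).
Proof.
move=> J_ocs J_anti ip_inner [c [_ ip_S5]] ip_S5_S2; split.
  exact: WS_pair_V7 ip_inner ip_S5 ip_S5_S2.
exact: not_nonsingular_V7.
Qed.
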